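(* Let $X=\{x_1,\dots,x_n\}$ be a set of Boolean variables and $\mathcal{C}=\{C_1,\dots,C_m\}$ a set of clauses, each consisting of exactly three positive literals (variables from $X$). Let $(G,L)$ be the graph and list assignment constructed from $(\mathcal{C},X)$ as described in the context. Then there is a truth assignment for $X$ such that every clause contains at least one true literal and at least one false literal if and only if $G$ has a colouring that respects $L$.
   Context: Construction of $(G,L)$: for each $x_i\in X$ introduce two adjacent vertices $x_i$ and $\overline{x}_i$ (called $x$-type) with $L(x_i)=L(\overline{x}_i)=\{4,5\}$. For each clause $C_j$ introduce two vertices $C_j$ and $C_j'$ (called $C$-type) with $L(C_j)=L(C_j')=\{1,2,3\}$. Add an edge between every $x$-type vertex and every $C$-type vertex. For each clause $C_j$, fix an order of its literals, say $C_j=\{x_g,x_h,x_i\}$ in that order, and add six new vertices $a_{g,j},a_{h,j},a_{i,j},a'_{g,j},a'_{h,j},a'_{i,j}$ (called $a$-type) with edges $x_ga_{g,j}$, $a_{g,j}C_j$, $x_ha_{h,j}$, $a_{h,j}C_j$, $x_ia_{i,j}$, $a_{i,j}C_j$, $\overline{x}_ga'_{g,j}$, $a'_{g,j}C_j'$, $\overline{x}_ha'_{h,j}$, $a'_{h,j}C_j'$, $\overline{x}_ia'_{i,j}$, $a'_{i,j}C_j'$, and lists $L(a_{g,j})=L(a'_{g,j})=\{1,4\}$, $L(a_{h,j})=L(a'_{h,j})=\{2,4\}$, $L(a_{i,j})=L(a'_{i,j})=\{3,4\}$. A colouring of $G$ is a map $c$ from vertices to positive integers with adjacent vertices receiving distinct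 colours; it respects $L$ if $c(u)\in L(u)$ for every vertex $u$. *)

From mathcomp Require Import all_boot.
Set Implicit Arguments. Unset Strict Implicit. Unset Printing Implicit Defensive.

(* A 3-SAT instance with positive literals: [cl j k] is the k-th literal
   (k = 0,1,2 in the fixed order g,h,i) of clause C_j, a variable index. *)

(* Vertices of G.
   VX i true  = x_i,   VX i false = \overline{x}_i
   VC j true  = C_j,   VC j false = C_j'
   VA j k true  = a_{cl j k, j},   VA j k false = a'_{cl j k, j} *)
Inductive vertex (n m : nat) : Type :=
| VX : 'I_n -> bool -> vertex n m
| VC : 'I_m -> bool -> vertex n m
| VA : 'I_m -> 'I_3 -> bool -> vertex n m.

Inductive edge (n m : nat) (cl : 'I_m -> 'I_3 -> 'I_n) : vertex n m -> vertex n m -> Prop :=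
| E_xxbar : forall i, edge cl (VX m i true) (VX m i false)
| E_xC : forall i b j b', edge cl (VX m i b) (VC n j b')
| E_ax : forall j k b, edge cl (VX m (cl j k) b) (VA n j k b)
| E_aC : forall j k b, edge cl (VA n j k b) (VC n j b).

Definition adj n m (cl : 'I_m -> 'I_3 -> 'I_n) (u v : vertex n m) : Prop :=
  edge cl u v \/ edge cl v u.

Definition L n m (v : vertex n m) : nat -> Prop :=
  match v with
  | VX _ _ => fun c => c = 4 \/ c = 5
  | VC _ _ => fun c => c = 1 \/ c = 2 \/ c = 3
  | VA _ k _ => fun c => c = (val k).+1 \/ c = 4
  end.

Definition colouring n m (cl : 'I_m -> 'I_3 -> 'I_n) (c : vertex n m -> nat) : Prop :=
  (forall v, 0 < c v) /\ (forall u v, adj cl u v -> c u <> c v).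

Definition respects n m (c : vertex n m -> nat) : Prop :=
  forall v, L v (c v).

Definition nae_sat n m (cl : 'I_m -> 'I_3 -> 'I_n) (t : 'I_n -> bool) : Prop :=
  forall j, (exists k, t (cl j k) = true) /\ (exists k, t (cl j k) = false).

From mathcomp Require Import all_boot.
From mathcomp Require Import zify.

Set Implicit Arguments. Unset Strict Implicit. Unset Printing Implicit Defensive.

(* Colours 4 and 5 on the x-type vertices encode truth values: x_i gets 5 iff
   x_i is true and its partner \overline{x}_i gets 5 iff x_i is false.  In a
   colouring respecting L, C_j takes a colour k+1 <= 3, which forces a_{k,j} to
   be 4 and hence the k-th literal vertex to be 5, i.e. true; symmetrically C_j'
   produces a false literal.  Conversely, from a not-all-equal assignment colour
   C_j (resp. C_j') by the position of a true (resp. false) literal, that one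
   a-vertex by 4 and every other a-vertex by its private colour. *)

Section ColouringOfEdges.

Variables (n m : nat) (cl : 'I_m -> 'I_3 -> 'I_n).

Lemma respects_gt0 (c : vertex n m -> nat) : respects c -> forall v, 0 < c v.
Proof. by move=> Hr v; have := Hr v; case: v => [i b|j b|j k b] /=; lia. Qed.

Lemma colouring_of_edges (c : vertex n m -> nat) :
  respects c -> (forall u v, edge cl u v -> c u <> c v) -> colouring cl c.
Proof.
move=> Hr Hedge; split; first exact: respects_gt0.
move=> u v [Huv|Hvu]; first exact: Hedge.
by move=> Heq; apply: (Hedge _ _ Hvu).
Qed.

End ColouringOfEdges.

Section ColouringToAssignment.

Variables (n m : nat) (cl : 'I_m -> 'I_3 -> 'I_n) (c : vertex n m -> nat).
Hypotheses (Hcol : colouring cl c) (Hr : respects c).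

Lemma adj_colour_neq {u v : vertex n m} : edge cl u v -> c u <> c v.
Proof. by move=> Huv; apply: (proj2 Hcol); left. Qed.

Lemma literal_colour_forced j b (k : 'I_3) :
  c (VC n j b) = k.+1 -> c (VX m (cl j k) b) = 5.
Proof.
move=> Hk.
have HaC := adj_colour_neq (E_aC cl j k b).
have HxA := adj_colour_neq (E_ax cl j k b).
have := Hr (VA n j k b); have := Hr (VX m (cl j k) b); rewrite /L /=; lia.
Qed.

Lemma exists_literal_coloured_5 j b : exists k : 'I_3, c (VX m (cl j k) b) = 5.
Proof.
have := Hr (VC n j b); rewrite /L /= => -[H|[H|H]].
- by exists (@Ordinal 3 0 isT); apply: literal_colour_forced.
- by exists (@Ordinal 3 1 isT); apply: literal_colour_forced.
- by exists (@Ordinal 3 2 isT); apply: literal_colour_forced.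
Qed.

Lemma nae_sat_of_colouring : nae_sat cl (fun i => c (VX m i true) == 5).
Proof.
move=> j; split.
- by have [k Hk] := exists_literal_coloured_5 j true; exists k; rewrite Hk.
- have [k Hk] := exists_literal_coloured_5 j false; exists k.
  by apply/eqP; rewrite -Hk; apply: adj_colour_neq; constructor.
Qed.

End ColouringToAssignment.

Section AssignmentToColouring.

Variables (n m : nat) (cl : 'I_m -> 'I_3 -> 'I_n) (t : 'I_n -> bool).
Hypothesis Ht : nae_sat cl t.

Definition literal_with_value (j : 'I_m) (b : bool) : 'I_3 :=
  odflt ord0 [pick k | t (cl j k) == b].

Lemma literal_with_valueP j b : t (cl j (literal_with_value j b)) = b.
Proof.
have [k Hk] : exists k, t (cl j k) = b by case: b; case: (Ht j).
rewrite /literal_with_value; case: pickP => [k' /eqP //|Hnone].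
by have := Hnone k; rewrite /= Hk eqxx.
Qed.

Definition nae_colouring (v : vertex n m) : nat :=
  match v with
  | VX i b => if t i == b then 5 else 4
  | VC j b => (literal_with_value j b).+1
  | VA j k b => if k == literal_with_value j b then 4 else k.+1
  end.

Lemma nae_colouring_respects : respects nae_colouring.
Proof.
case=> [i b|j b|j k b] /=; rewrite /L.
- by case: (_ == _); auto.
- have := ltn_ord (literal_with_value j b); lia.
- by case: (_ == _); auto.
Qed.

Lemma nae_colouring_edge u v : edge cl u v -> nae_colouring u <> nae_colouring v.
Proof.
case=> /= [i|i b j b'|j k b|j k b].
- by case: (t i).
- have := ltn_ord (literal_with_value j b'); case: (_ == _); lia.
- case: (k =P literal_with_value j b) => [->|_].
    by rewrite literal_with_valueP eqxx.
  have := ltn_ord k; case: (_ == _); lia.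
- case: (k =P literal_with_value j b) => [_|Hne].
    have := ltn_ord (literal_with_value j b); lia.
  by move=> [] /val_inj.
Qed.

Lemma nae_colouring_colouring : colouring cl nae_colouring.
Proof.
exact: colouring_of_edges nae_colouring_respects nae_colouring_edge.
Qed.

End AssignmentToColouring.

Theorem lemma1 (n m : nat) (cl : 'I_m -> 'I_3 -> 'I_n)
  (Hdistinct : forall j, injective (cl j)) :
  (exists t : 'I_n -> bool, nae_sat cl t) <->
  (exists c : vertex n m -> nat, colouring cl c /\ respects c).
Proof.
split.
- move=> [t Ht]; exists (nae_colouring cl t).
  by split; [exact: nae_colouring_colouring | exact: nae_colouring_respects].
- move=> [c [Hcol Hr]]; exists (fun i => c (VX m i true) == 5).
  exact: nae_sat_of_colouring.
Qed.
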